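(* A countably infinite metric space is isometric to a dense subset of the Urysohn space $\mathbb U$ if and only if it satisfies the almost extension property.
   Context: $\mathbb U$ denotes Urysohn's universal separable metric space: the unique (up to isometry) complete separable metric space such that for every finite metric space $F=\{x_0,\dots,x_n\}$, every isometry $\{x_0,\dots,x_{n-1}\}\to\mathbb U$ extends to an isometry $F\to\mathbb U$. For $\lambda>1$, an injection $f$ is $\lambda$-bi-Lipschitz if for all distinct $a,b$ in its domain $d(f(a),f(b))<\lambda d(a,b)$ and $d(a,b)<\lambda d(f(a),f(b))$. A metric space $X$ has the almost extension property if for every finite metric space $F=\{x_0,\dots,x_{n-1},x_n\}$ and every $\lambda>1$, every $\lambda$-bi-Lipschitz map $f:\{x_0,\dots,x_{n-1}\}\to X$ extends to a $\lambda$-bi-Lipschitz map $\hat f:F\to X$. *)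

From Stdlib Require Import Reals Lra.
Open Scope R_scope.

(* A metric on a type T. (Nonnegativity follows from these axioms.) *)
Record metric_on (T : Type) (d : T -> T -> R) : Prop := {
  met_eq0 : forall x y, d x y = 0 <-> x = y;
  met_sym : forall x y, d x y = d y x;
  met_tri : forall x y z, d x z <= d x y + d y z
}.

(* A finite metric space F = {x_0, ..., x_n}, with points indexed by 0..n
   and metric dF restricted to those indices. *)
Definition fin_metric (n : nat) (dF : nat -> nat -> R) : Prop :=
  (forall i j, (i <= n)%nat -> (j <= n)%nat -> (dF i j = 0 <-> i = j)) /\
  (forall i j, (i <= n)%nat -> (j <= n)%nat -> dF i j = dF j i) /\
  (forall i j k, (i <= n)%nat -> (j <= n)%nat -> (k <= n)%nat ->
      dF i k <= dF i j + dF j k).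

Definition complete_space {T : Type} (d : T -> T -> R) : Prop :=
  forall u : nat -> T,
    (forall eps, 0 < eps -> exists N, forall m k, (N <= m)%nat -> (N <= k)%nat ->
        d (u m) (u k) < eps) ->
    exists l, forall eps, 0 < eps -> exists N, forall m, (N <= m)%nat -> d (u m) l < eps.

Definition dense_in {T : Type} (d : T -> T -> R) (A : T -> Prop) : Prop :=
  forall x eps, 0 < eps -> exists y, A y /\ d x y < eps.

Definition separable {T : Type} (d : T -> T -> R) : Prop :=
  exists s : nat -> T, dense_in d (fun y => exists k, s k = y).

Definition extension_property {T : Type} (d : T -> T -> R) : Prop :=
  forall (n : nat) (dF : nat -> nat -> R) (f : nat -> T),
    fin_metric n dF ->
    (forall i j, (i < n)%nat -> (j < n)%nat -> d (f i) (f j) = dF i j) ->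
    exists g : nat -> T,
      (forall i, (i < n)%nat -> g i = f i) /\
      (forall i j, (i <= n)%nat -> (j <= n)%nat -> d (g i) (g j) = dF i j).

(* Urysohn space: complete separable metric space with the extension property
   (unique up to isometry). *)
Definition is_urysohn {T : Type} (d : T -> T -> R) : Prop :=
  metric_on T d /\ complete_space d /\ separable d /\ extension_property d.

Definition bilip (m : nat) (lam : R) (dF : nat -> nat -> R)
    {T : Type} (d : T -> T -> R) (f : nat -> T) : Prop :=
  (forall i j, (i < m)%nat -> (j < m)%nat -> f i = f j -> i = j) /\
  (forall i j, (i < m)%nat -> (j < m)%nat -> i <> j ->
      d (f i) (f j) < lam * dF i j /\ dF i j < lam * d (f i) (f j)).

Definition almost_extension_property {T : Type} (d : T -> T -> R) : Prop :=
  forall (n : nat) (dF : nat -> nat -> R) (lam : R) (f : nat -> T),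
    fin_metric n dF -> 1 < lam ->
    bilip n lam dF d f ->
    exists g : nat -> T,
      (forall i, (i < n)%nat -> g i = f i) /\ bilip (S n) lam dF d g.

Definition countably_infinite (T : Type) : Prop :=
  exists e : nat -> T, (forall a b, e a = e b -> a = b) /\ (forall x, exists a, e a = x).

Definition isometric_to_dense_subset {T U : Type} (d : T -> T -> R) (dU : U -> U -> R) : Prop :=
  exists e : T -> U,
    (forall x y, dU (e x) (e y) = d x y) /\
    dense_in dU (fun u => exists x, e x = u).

(* Dense subset => almost extension property: a [lam]-bi-Lipschitz map on
   F \ {x_n} is [t]-Lipschitz for some [t < lam], so a McShane-type formula
   yields admissible (Katětov) distances from a new point which are
   [lam]-close to the distances from x_n.  The extension property of U realizes
   them by a point of U, and density replaces that point by a nearby point of X.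

   Almost extension property => dense embedding: a back-and-forth construction
   of finite partial isometries from X to U.  Going forth uses the extension
   property of U to place the next point of an enumeration of X; going back, the
   almost extension property of X produces a point whose distances are almost
   those of a given point u of U, and the extension property of U turns them
   into an exact copy close to u.  The union of the chain is an isometry with
   dense image. *)

From Stdlib Require Import Reals Lra Lia Classical ClassicalEpsilon.
Open Scope R_scope.

Section MetricFacts.
Context {T : Type} {d : T -> T -> R} (Hd : metric_on T d).

Lemma metric_refl x : d x x = 0.
Proof. now apply (met_eq0 T d Hd). Qed.

Lemma metric_eq x y : d x y = 0 -> x = y.
Proof. apply (met_eq0 T d Hd). Qed.

Lemma metric_nonneg x y : 0 <= d x y.
Proof.
  pose proof (met_tri T d Hd x y x) as Htri.
  rewrite metric_refl, (met_sym T d Hd y x) in Htri. lra.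
Qed.

Lemma metric_pos x y : x <> y -> 0 < d x y.
Proof.
  intros Hxy. destruct (Rle_lt_or_eq_dec 0 (d x y) (metric_nonneg x y)) as [Hlt|Heq]; auto.
  exfalso. apply Hxy, metric_eq. auto.
Qed.

End MetricFacts.

Section FinMetricFacts.
Context {n : nat} {dF : nat -> nat -> R} (HF : fin_metric n dF).

Lemma fin_metric_nonneg i j : (i <= n)%nat -> (j <= n)%nat -> 0 <= dF i j.
Proof.
  destruct HF as [F0 [Fsym Ftri]]. intros Hi Hj.
  pose proof (Ftri i j i Hi Hj Hi) as Htri.
  rewrite (Fsym j i Hj Hi), (proj2 (F0 i i Hi Hi) eq_refl) in Htri. lra.
Qed.

Lemma fin_metric_pos i j : (i <= n)%nat -> (j <= n)%nat -> i <> j -> 0 < dF i j.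
Proof.
  intros Hi Hj Hij.
  destruct (Rle_lt_or_eq_dec 0 (dF i j) (fin_metric_nonneg i j Hi Hj)) as [Hlt|Heq]; auto.
  exfalso. apply Hij, (proj1 HF); auto.
Qed.

End FinMetricFacts.

Lemma injective_fin_metric {T : Type} {d : T -> T -> R} (Hd : metric_on T d) n (c : nat -> T) :
  (forall i j, (i <= n)%nat -> (j <= n)%nat -> c i = c j -> i = j) ->
  fin_metric n (fun i j => d (c i) (c j)).
Proof.
  intros Hinj. split; [|split].
  - intros i j Hi Hj. split.
    + intros H0. apply Hinj; auto. apply (metric_eq Hd). exact H0.
    + intros ->. apply (metric_refl Hd).
  - intros. apply (met_sym T d Hd).
  - intros. apply (met_tri T d Hd).
Qed.

Fixpoint min_upto (g : nat -> R) (k : nat) : R :=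
  match k with O => g O | S k' => Rmin (min_upto g k') (g (S k')) end.

Lemma min_upto_le g k j : (j <= k)%nat -> min_upto g k <= g j.
Proof.
  induction k as [|k IH]; intros Hj; simpl.
  - replace j with O by lia. lra.
  - destruct (Nat.eq_dec j (S k)) as [->|Hne].
    + apply Rmin_r.
    + eapply Rle_trans; [apply Rmin_l | apply IH; lia].
Qed.

Lemma min_upto_attained g k : exists j, (j <= k)%nat /\ min_upto g k = g j.
Proof.
  induction k as [|k [j [Hj Hmin]]]; simpl.
  - exists O. auto.
  - unfold Rmin. destruct (Rle_dec (min_upto g k) (g (S k))).
    + exists j. split; [lia | auto].
    + exists (S k). auto.
Qed.

Lemma finite_strict_upper_bound (g : nat -> R) B n :
  (forall j, (j < n)%nat -> g j < B) ->
  exists t, t < B /\ forall j, (j < n)%nat -> g j <= t.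
Proof.
  intros Hg. destruct n as [|n].
  - exists (B - 1). split; [lra | intros; lia].
  - destruct (min_upto_attained (fun j => - g j) n) as [j [Hj Hmin]].
    exists (g j). split; [apply Hg; lia|].
    intros l Hl. pose proof (min_upto_le (fun j => - g j) n l ltac:(lia)). lra.
Qed.

Lemma finite_pos_lower_bound (g : nat -> R) n :
  (forall j, (j < n)%nat -> 0 < g j) ->
  exists e, 0 < e /\ forall j, (j < n)%nat -> e <= g j.
Proof.
  intros Hg. destruct (finite_strict_upper_bound (fun j => - g j) 0 n) as [t [Ht Hle]].
  - intros j Hj. specialize (Hg j Hj). lra.
  - exists (- t). split; [lra|]. intros j Hj. specialize (Hle j Hj). lra.
Qed.

(* Pairs [(j, l)] with [j, l < n] are enumerated as [j * n + l < n * n]. *)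
Lemma finite_strict_upper_bound2 (g : nat -> nat -> R) B n :
  (forall j l, (j < n)%nat -> (l < n)%nat -> g j l < B) ->
  exists t, t < B /\ forall j l, (j < n)%nat -> (l < n)%nat -> g j l <= t.
Proof.
  intros Hg.
  destruct (finite_strict_upper_bound (fun k => g (k / n) (k mod n))%nat B (n * n))
    as [t [HtB Ht]].
  - intros k Hk. apply Hg.
    + now apply Nat.Div0.div_lt_upper_bound.
    + apply Nat.mod_upper_bound. lia.
  - exists t. split; [exact HtB|]. intros j l Hj Hl.
    specialize (Ht (j * n + l)%nat ltac:(nia)).
    rewrite Nat.div_add_l, Nat.div_small, Nat.add_0_r in Ht by lia.
    rewrite Nat.add_comm, Nat.Div0.mod_add, Nat.mod_small in Ht by lia.
    exact Ht.
Qed.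

(** * Katětov functions and one-point extensions *)

Definition snoc {A : Type} (n : nat) (c : nat -> A) (p : A) : nat -> A :=
  fun i => if (i <? n)%nat then c i else p.

Lemma snoc_lt {A : Type} n (c : nat -> A) p i : (i < n)%nat -> snoc n c p i = c i.
Proof. intros Hi. unfold snoc. destruct (Nat.ltb_spec i n); [reflexivity | lia]. Qed.

Lemma snoc_last {A : Type} n (c : nat -> A) p : snoc n c p n = p.
Proof. unfold snoc. destruct (Nat.ltb_spec n n); [lia | reflexivity]. Qed.

Lemma snoc_inj {A : Type} n (c : nat -> A) p :
  (forall i j, (i < n)%nat -> (j < n)%nat -> c i = c j -> i = j) ->
  (forall i, (i < n)%nat -> c i <> p) ->
  forall i j, (i <= n)%nat -> (j <= n)%nat -> snoc n c p i = snoc n c p j -> i = j.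
Proof.
  intros Hinj Hp i j Hi Hj.
  destruct (proj1 (Nat.lt_eq_cases i n) Hi) as [Hin | ->],
           (proj1 (Nat.lt_eq_cases j n) Hj) as [Hjn | ->];
    rewrite ?snoc_last, ?snoc_lt by auto; intros Heq; auto.
  - now destruct (Hp i Hin).
  - now destruct (Hp j Hjn).
Qed.

(* Admissible distances from a new point to [c 0], ..., [c (n-1)]. *)
Record katetov {T : Type} (d : T -> T -> R) (n : nat) (c : nat -> T) (h : nat -> R) : Prop := {
  katetov_pos : forall i, (i < n)%nat -> 0 < h i;
  katetov_lipschitz : forall i j, (i < n)%nat -> (j < n)%nat -> h i <= h j + d (c i) (c j);
  katetov_triangle : forall i j, (i < n)%nat -> (j < n)%nat -> d (c i) (c j) <= h i + h j
}.

Lemma distance_katetov {T : Type} {d : T -> T -> R} (Hd : metric_on T d) n (c : nat -> T) x :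
  (forall i, (i < n)%nat -> x <> c i) -> katetov d n c (fun i => d x (c i)).
Proof.
  intros Hx. split.
  - intros i Hi. apply (metric_pos Hd), Hx, Hi.
  - intros i j _ _. pose proof (met_tri T d Hd x (c j) (c i)).
    rewrite (met_sym T d Hd (c j) (c i)) in *. lra.
  - intros i j _ _. pose proof (met_tri T d Hd (c i) x (c j)).
    rewrite (met_sym T d Hd (c i) x) in *. lra.
Qed.

Lemma katetov_transfer {T T' : Type} (d : T -> T -> R) (d' : T' -> T' -> R) n c c' h :
  (forall i j, (i < n)%nat -> (j < n)%nat -> d' (c' i) (c' j) = d (c i) (c j)) ->
  katetov d n c h -> katetov d' n c' h.
Proof.
  intros Hiso [Hpos Hlip Htri]. split; auto; intros i j Hi Hj; rewrite Hiso; auto.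
Qed.

Lemma katetov_snoc {T : Type} {d : T -> T -> R} (Hd : metric_on T d) n c h p r :
  katetov d n c h -> 0 < r ->
  (forall i, (i < n)%nat ->
     h i <= r + d (c i) p /\ r <= h i + d (c i) p /\ d (c i) p <= h i + r) ->
  katetov d (S n) (snoc n c p) (snoc n h r).
Proof.
  intros [Hpos Hlip Htri] Hr Hp. split.
  - intros i Hi. destruct (proj1 (Nat.lt_eq_cases i n) ltac:(lia)) as [Hin | ->].
    + rewrite snoc_lt; auto.
    + rewrite snoc_last. exact Hr.
  - intros i j Hi Hj.
    destruct (proj1 (Nat.lt_eq_cases i n) ltac:(lia)) as [Hin | ->],
             (proj1 (Nat.lt_eq_cases j n) ltac:(lia)) as [Hjn | ->];
      rewrite ?snoc_last, ?snoc_lt by auto.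
    + auto.
    + apply Hp, Hin.
    + rewrite (met_sym T d Hd). apply Hp, Hjn.
    + rewrite (metric_refl Hd). lra.
  - intros i j Hi Hj.
    destruct (proj1 (Nat.lt_eq_cases i n) ltac:(lia)) as [Hin | ->],
             (proj1 (Nat.lt_eq_cases j n) ltac:(lia)) as [Hjn | ->];
      rewrite ?snoc_last, ?snoc_lt by auto.
    + auto.
    + apply Hp, Hin.
    + rewrite (met_sym T d Hd). pose proof (proj2 (proj2 (Hp j Hjn))). lra.
    + rewrite (metric_refl Hd). lra.
Qed.

Lemma katetov_fin_metric {T : Type} {d : T -> T -> R} (Hd : metric_on T d) n c h :
  (forall i j, (i < n)%nat -> (j < n)%nat -> c i = c j -> i = j) ->
  katetov d n c h ->
  fin_metric n (fun i j => if (i =? n)%nat then (if (j =? n)%nat then 0 else h j)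
                           else if (j =? n)%nat then h i else d (c i) (c j)).
Proof.
  intros Hinj [Hpos Hlip Htri]. split; [|split].
  - intros i j Hi Hj.
    destruct (Nat.eqb_spec i n), (Nat.eqb_spec j n); split; intros H; try lia; try lra.
    + pose proof (Hpos j ltac:(lia)). lra.
    + pose proof (Hpos i ltac:(lia)). lra.
    + apply Hinj; try lia. apply (metric_eq Hd), H.
    + subst. apply (metric_refl Hd).
  - intros i j _ _.
    destruct (Nat.eqb_spec i n), (Nat.eqb_spec j n); auto. apply (met_sym T d Hd).
  - intros i j k Hi Hj Hk.
    destruct (Nat.eqb_spec i n), (Nat.eqb_spec j n), (Nat.eqb_spec k n); try lra.
    + pose proof (Hpos j ltac:(lia)). lra.
    + pose proof (Hlip k j ltac:(lia) ltac:(lia)). rewrite (met_sym T d Hd (c j) (c k)). lra.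
    + apply Htri; lia.
    + pose proof (Hlip i j ltac:(lia) ltac:(lia)). lra.
    + apply (met_tri T d Hd).
Qed.

Lemma extension_property_realizes {U : Type} {dU : U -> U -> R}
  (HM : metric_on U dU) (HE : extension_property dU) n c h :
  (forall i j, (i < n)%nat -> (j < n)%nat -> c i = c j -> i = j) ->
  katetov dU n c h -> exists q, forall i, (i < n)%nat -> dU q (c i) = h i.
Proof.
  intros Hinj Hh.
  destruct (HE n _ c (katetov_fin_metric HM n c h Hinj Hh)) as [g [Hgc Hg]].
  - intros i j Hi Hj. destruct (Nat.eqb_spec i n), (Nat.eqb_spec j n); try lia. reflexivity.
  - exists (g n). intros i Hi. rewrite <- (Hgc i Hi), (Hg n i) by lia.
    destruct (Nat.eqb_spec n n), (Nat.eqb_spec i n); try lia. reflexivity.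
Qed.

(** * Bi-Lipschitz one-point extensions *)

Section BilipschitzExtension.
Context {X : Type} {dX : X -> X -> R} (HX : metric_on X dX).
Variables (n : nat) (dF : nat -> nat -> R) (lam : R) (f : nat -> X).
Hypotheses (HF : fin_metric n dF) (Hlam : 1 < lam) (Hf : bilip n lam dF dX f).

Lemma bilip_lipschitz_margin :
  exists t, 1 <= t < lam /\
    forall i j, (i < n)%nat -> (j < n)%nat -> dX (f i) (f j) <= t * dF i j.
Proof.
  destruct (finite_strict_upper_bound2
              (fun i j => if (i =? j)%nat then 0 else dX (f i) (f j) / dF i j) lam n)
    as [t0 [Ht0 Hle]].
  - intros i j Hi Hj. destruct (Nat.eqb_spec i j) as [_|Hij]; [lra|].
    destruct (proj2 Hf i j Hi Hj Hij) as [Hlt _].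
    pose proof (fin_metric_pos HF i j ltac:(lia) ltac:(lia) Hij).
    apply Rmult_lt_reg_r with (dF i j); auto.
    unfold Rdiv. rewrite Rmult_assoc, Rinv_l by lra. lra.
  - exists (Rmax 1 t0). split; [split; [apply Rmax_l | apply Rmax_lub_lt; lra]|].
    intros i j Hi Hj. specialize (Hle i j Hi Hj). simpl in Hle.
    destruct (Nat.eqb_spec i j) as [->|Hij].
    + rewrite (metric_refl HX), (proj2 (proj1 HF j j ltac:(lia) ltac:(lia)) eq_refl). lra.
    + pose proof (fin_metric_pos HF i j ltac:(lia) ltac:(lia) Hij).
      replace (dX (f i) (f j)) with (dX (f i) (f j) / dF i j * dF i j) by (field; lra).
      apply Rmult_le_compat_r; [lra|]. eapply Rle_trans; [exact Hle | apply Rmax_r].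
Qed.

(* McShane-type formula [h i = min_j (t dF(n, j) + dX(f j, f i))], with [t < lam]
   a Lipschitz constant of [f]. *)
Lemma bilip_katetov_extension :
  exists h, katetov dX n f h /\
    forall i, (i < n)%nat -> h i < lam * dF n i /\ dF n i < lam * h i.
Proof.
  destruct bilip_lipschitz_margin as [t [[Ht1 Htlam] Hlip]].
  destruct HF as [_ [Fsym Ftri]].
  set (h := fun i => min_upto (fun j => t * dF n j + dX (f j) (f i)) (pred n)).
  assert (h_le : forall i j, (j < n)%nat -> h i <= t * dF n j + dX (f j) (f i)).
  { intros i j Hj. apply (min_upto_le (fun j => t * dF n j + dX (f j) (f i))). lia. }
  assert (h_eq : forall i, (i < n)%nat ->
            exists j, (j < n)%nat /\ h i = t * dF n j + dX (f j) (f i)).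
  { intros i Hi. destruct (min_upto_attained (fun j => t * dF n j + dX (f j) (f i)) (pred n))
      as [j [Hj Hmin]]. exists j. split; [lia | exact Hmin]. }
  assert (Hnear : forall i, (i < n)%nat -> h i < lam * dF n i /\ dF n i < lam * h i).
  { intros i Hi. pose proof (fin_metric_pos HF n i ltac:(lia) ltac:(lia) ltac:(lia)).
    assert (Hlt : 1 < lam * t) by nra.
    split.
    - pose proof (h_le i i Hi). rewrite (metric_refl HX) in *. nra.
    - destruct (h_eq i Hi) as [j [Hj ->]].
      pose proof (metric_nonneg HX (f j) (f i)).
      pose proof (fin_metric_nonneg HF n j ltac:(lia) ltac:(lia)).
      assert (dF n j <= lam * t * dF n j) by nra.
      destruct (Nat.eq_dec j i) as [->|Hji]; [nra|].
      pose proof (proj2 (proj2 Hf j i Hj Hi Hji)).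
      pose proof (Ftri n j i ltac:(lia) ltac:(lia) ltac:(lia)). nra. }
  exists h. split; [split|exact Hnear].
  - intros i Hi. destruct (Hnear i Hi).
    pose proof (fin_metric_pos HF n i ltac:(lia) ltac:(lia) ltac:(lia)). nra.
  - intros i k Hi Hk. destruct (h_eq k Hk) as [j [Hj ->]].
    pose proof (h_le i j Hj). pose proof (met_tri X dX HX (f j) (f k) (f i)).
    rewrite (met_sym X dX HX (f k) (f i)) in *. lra.
  - intros i k Hi Hk.
    destruct (h_eq i Hi) as [j [Hj ->]], (h_eq k Hk) as [l [Hl ->]].
    pose proof (Hlip j l Hj Hl). pose proof (Ftri j n l ltac:(lia) ltac:(lia) ltac:(lia)).
    rewrite (Fsym j n) in * by lia.
    pose proof (met_tri X dX HX (f i) (f j) (f k)). pose proof (met_tri X dX HX (f j) (f l) (f k)).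
    rewrite (met_sym X dX HX (f i) (f j)) in *. nra.
Qed.

Lemma bilip_snoc x :
  (forall i, (i < n)%nat -> dX x (f i) < lam * dF n i /\ dF n i < lam * dX x (f i)) ->
  bilip (S n) lam dF dX (snoc n f x).
Proof.
  intros Hx. destruct Hf as [Hinj Hbi].
  assert (Hne : forall i, (i < n)%nat -> f i <> x).
  { intros i Hi Hfx. destruct (Hx i Hi) as [_ Hlt].
    pose proof (fin_metric_pos HF n i ltac:(lia) ltac:(lia) ltac:(lia)).
    rewrite <- Hfx, (metric_refl HX) in Hlt. lra. }
  split.
  - intros i j Hi Hj. apply snoc_inj; auto; lia.
  - intros i j Hi Hj Hij.
    destruct (proj1 (Nat.lt_eq_cases i n) ltac:(lia)) as [Hin | ->],
             (proj1 (Nat.lt_eq_cases j n) ltac:(lia)) as [Hjn | ->];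
      rewrite ?snoc_last, ?snoc_lt by auto; try lia.
    + auto.
    + rewrite (met_sym X dX HX), (proj1 (proj2 HF) i n) by lia. auto.
    + auto.
Qed.

End BilipschitzExtension.

Section DenseSubspace.
Context {U : Type} {dU : U -> U -> R} (HMU : metric_on U dU) (HEU : extension_property dU).
Context {X : Type} {dX : X -> X -> R} (HX : metric_on X dX).
Variables (e : X -> U) (He : forall x y, dU (e x) (e y) = dX x y)
  (Hdense : dense_in dU (fun u => exists x, e x = u)).

Lemma dense_isometry_approximates_katetov n f h eps :
  (forall i j, (i < n)%nat -> (j < n)%nat -> f i = f j -> i = j) ->
  katetov dX n f h -> 0 < eps ->
  exists x, forall i, (i < n)%nat -> Rabs (dX x (f i) - h i) < eps.
Proof.
  intros Hinj Hh Heps.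
  destruct (extension_property_realizes HMU HEU n (fun i => e (f i)) h) as [q Hq].
  - intros i j Hi Hj Hefij. apply Hinj; auto. apply (metric_eq HX).
    rewrite <- He, Hefij. apply (metric_refl HMU).
  - exact (katetov_transfer dX dU n f _ h (fun i j _ _ => He (f i) (f j)) Hh).
  - destruct (Hdense q eps Heps) as [u [[x <-] Hqx]]. exists x. intros i Hi.
    rewrite <- He, <- (Hq i Hi). apply Rabs_def1.
    + pose proof (met_tri U dU HMU (e x) q (e (f i))).
      rewrite (met_sym U dU HMU (e x) q) in *. lra.
    + pose proof (met_tri U dU HMU q (e x) (e (f i))). lra.
Qed.

Lemma dense_isometric_almost_extension : almost_extension_property dX.
Proof.
  intros n dF lam f HF Hlam Hf.
  destruct (bilip_katetov_extension HX n dF lam f HF Hlam Hf) as [h [Hh Hnear]].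
  set (margin := fun i => Rmin (lam * dF n i - h i) (lam * h i - dF n i)).
  destruct (finite_pos_lower_bound (fun i => margin i / lam) n) as [eps [Heps Hle]].
  { intros i Hi. destruct (Hnear i Hi).
    apply Rdiv_lt_0_compat; [apply Rmin_glb_lt|]; lra. }
  destruct (dense_isometry_approximates_katetov n f h eps (proj1 Hf) Hh Heps) as [x Hx].
  exists (snoc n f x). split.
  - intros i Hi. apply snoc_lt, Hi.
  - apply (bilip_snoc HX n dF lam f HF Hf). intros i Hi.
    assert (Hm : lam * eps <= margin i).
    { replace (margin i) with (lam * (margin i / lam)) by (field; lra).
      apply Rmult_le_compat_l; [lra | exact (Hle i Hi)]. }
    pose proof (Rmin_l (lam * dF n i - h i) (lam * h i - dF n i)).
    pose proof (Rmin_r (lam * dF n i - h i) (lam * h i - dF n i)).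
    specialize (Hx i Hi). apply Rabs_def2 in Hx. fold (margin i) in *.
    assert (eps <= lam * eps) by nra. nra.
Qed.

End DenseSubspace.

(** * Back and forth *)

Section BackAndForth.
Context {U : Type} {dU : U -> U -> R} (HMU : metric_on U dU) (HEU : extension_property dU).
Context {X : Type} {dX : X -> X -> R} (HX : metric_on X dX).

Record stage := { len : nat; dom : nat -> X; img : nat -> U }.

Definition partial_isometry (s : stage) : Prop :=
  (forall i j, (i < len s)%nat -> (j < len s)%nat ->
     dU (img s i) (img s j) = dX (dom s i) (dom s j)) /\
  (forall i j, (i < len s)%nat -> (j < len s)%nat -> dom s i = dom s j -> i = j).

Definition extends (s s' : stage) : Prop :=
  (len s <= len s')%nat /\
  forall i, (i < len s)%nat -> dom s' i = dom s i /\ img s' i = img s i.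

Lemma extends_refl s : extends s s.
Proof. split; auto. Qed.

Lemma extends_trans s1 s2 s3 : extends s1 s2 -> extends s2 s3 -> extends s1 s3.
Proof.
  intros [Hle12 H12] [Hle23 H23]. split; [lia|]. intros i Hi.
  destruct (H12 i Hi), (H23 i ltac:(lia)). split; congruence.
Qed.

Lemma partial_isometry_img_inj s :
  partial_isometry s ->
  forall i j, (i < len s)%nat -> (j < len s)%nat -> img s i = img s j -> i = j.
Proof.
  intros [Hiso Hinj] i j Hi Hj Himg. apply Hinj; auto. apply (metric_eq HX).
  rewrite <- Hiso, Himg by auto. apply (metric_refl HMU).
Qed.

Definition push (s : stage) (x : X) (q : U) : stage :=
  {| len := S (len s); dom := snoc (len s) (dom s) x; img := snoc (len s) (img s) q |}.

Lemma push_extends s x q : extends s (push s x q).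
Proof.
  split; simpl; [lia|]. intros i Hi. rewrite !snoc_lt by exact Hi. auto.
Qed.

Lemma push_partial_isometry s x q :
  partial_isometry s ->
  (forall i, (i < len s)%nat -> x <> dom s i) ->
  (forall i, (i < len s)%nat -> dU q (img s i) = dX x (dom s i)) ->
  partial_isometry (push s x q).
Proof.
  intros [Hiso Hinj] Hx Hq. split; simpl; intros i j Hi Hj.
  - destruct (proj1 (Nat.lt_eq_cases i (len s)) ltac:(lia)) as [Hin | ->],
             (proj1 (Nat.lt_eq_cases j (len s)) ltac:(lia)) as [Hjn | ->];
      rewrite ?snoc_last, ?snoc_lt by auto.
    + auto.
    + rewrite (met_sym U dU HMU), (met_sym X dX HX). auto.
    + auto.
    + rewrite (metric_refl HMU), (metric_refl HX). reflexivity.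
  - apply snoc_inj; auto; [intros k Hk Heq; now apply (Hx k Hk) | lia..].
Qed.

Lemma forth s x :
  partial_isometry s ->
  exists s', partial_isometry s' /\ extends s s' /\
    exists i, (i < len s')%nat /\ dom s' i = x.
Proof.
  intros Hs.
  destruct (classic (exists i, (i < len s)%nat /\ dom s i = x)) as [Hin | Hout].
  { exists s. split; [|split]; auto using extends_refl. }
  assert (Hx : forall i, (i < len s)%nat -> x <> dom s i).
  { intros i Hi Hxi. apply Hout. eauto. }
  destruct (extension_property_realizes HMU HEU (len s) (img s) (fun i => dX x (dom s i)))
    as [q Hq].
  - apply partial_isometry_img_inj, Hs.
  - apply (katetov_transfer dX dU _ (dom s)); [apply Hs|].
    apply (distance_katetov HX), Hx.
  - exists (push s x q). split; [|split].
    + apply push_partial_isometry; auto.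
    + apply push_extends.
    + exists (len s). simpl. split; [lia | apply snoc_last].
Qed.

Lemma approximate_preimage s u lam :
  almost_extension_property dX -> partial_isometry s -> 1 < lam ->
  (forall i, (i < len s)%nat -> img s i <> u) ->
  exists x, forall i, (i < len s)%nat ->
    x <> dom s i /\ dX x (dom s i) < lam * dU (img s i) u /\ dU (img s i) u < lam * dX x (dom s i).
Proof.
  intros HA Hs Hlam Hu. set (m := len s). set (c := snoc m (img s) u).
  destruct (HA m (fun i j => dU (c i) (c j)) lam (dom s)) as [g [Hgdom [Hginj Hgbi]]].
  - apply (injective_fin_metric HMU), snoc_inj; [apply partial_isometry_img_inj, Hs | exact Hu].
  - exact Hlam.
  - split; [apply Hs|]. intros i j Hi Hj Hij. unfold c. rewrite !snoc_lt, (proj1 Hs) by auto.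
    pose proof (metric_pos HX (dom s i) (dom s j) (fun H => Hij (proj2 Hs i j Hi Hj H))).
    split; nra.
  - exists (g m). intros i Hi. rewrite <- (Hgdom i Hi).
    destruct (Hgbi m i ltac:(lia) ltac:(lia) ltac:(lia)) as [Hlt1 Hlt2].
    unfold c in Hlt1, Hlt2.
    rewrite snoc_last, snoc_lt, (met_sym U dU HMU u) in Hlt1, Hlt2 by exact Hi.
    split; [|split; assumption]. intros Hgg. apply Hginj in Hgg; lia.
Qed.

(* Going back: [x] is a (1 + k)-approximate preimage of [u], and [q] realizes the
   distances of [x] to [dom s] together with distance [delta] to [u]; [k] is small
   enough for these distances to be compatible. *)
Lemma back s u eps :
  almost_extension_property dX -> partial_isometry s -> 0 < eps ->
  exists s', partial_isometry s' /\ extends s s' /\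
    exists i, (i < len s')%nat /\ dU (img s' i) u < eps.
Proof.
  intros HA Hs Heps.
  destruct (classic (exists i, (i < len s)%nat /\ dU (img s i) u < eps)) as [Hin | Hout].
  { exists s. split; [|split]; auto using extends_refl. }
  assert (Hfar : forall i, (i < len s)%nat -> eps <= dU (img s i) u).
  { intros i Hi. apply Rnot_lt_le. intros Hlt. apply Hout. eauto. }
  assert (Hu : forall i, (i < len s)%nat -> img s i <> u).
  { intros i Hi Hiu. pose proof (Hfar i Hi). rewrite Hiu, (metric_refl HMU) in *. lra. }
  set (m := len s). set (delta := eps / 2).
  destruct (finite_pos_lower_bound (fun i => delta / dU (img s i) u) m) as [k [Hk Hkle]].
  { intros i Hi. pose proof (Hfar i Hi). unfold delta. apply Rdiv_lt_0_compat; lra. }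
  assert (Hkd : forall i, (i < m)%nat -> k * dU (img s i) u <= delta).
  { intros i Hi. pose proof (Hfar i Hi). specialize (Hkle i Hi). simpl in Hkle.
    replace delta with (delta / dU (img s i) u * dU (img s i) u) by (field; lra).
    apply Rmult_le_compat_r; lra. }
  destruct (approximate_preimage s u (1 + k) HA Hs ltac:(lra) Hu) as [x Hx].
  destruct (extension_property_realizes HMU HEU (S m) (snoc m (img s) u)
              (snoc m (fun i => dX x (dom s i)) delta)) as [q Hq].
  - intros i j Hi Hj.
    apply snoc_inj; [apply partial_isometry_img_inj, Hs | exact Hu | lia | lia].
  - apply (katetov_snoc HMU); [| unfold delta; lra |].
    + apply (katetov_transfer dX dU _ (dom s)); [apply Hs|].
      apply (distance_katetov HX). apply Hx.
    + intros i Hi. destruct (Hx i Hi) as [_ [Hlt1 Hlt2]].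
      pose proof (Hfar i Hi). pose proof (Hkd i Hi).
      pose proof (metric_nonneg HX x (dom s i)).
      split; [nra | split; [unfold delta in *; lra|]].
      destruct (Rle_or_lt (dU (img s i) u) (dX x (dom s i))); [unfold delta in *; lra | nra].
  - exists (push s x q). split; [|split].
    + apply push_partial_isometry; [exact Hs | apply Hx|].
      intros i Hi. specialize (Hq i ltac:(lia)). rewrite !snoc_lt in Hq by exact Hi. exact Hq.
    + apply push_extends.
    + exists m. simpl. rewrite snoc_last. split; [lia|].
      specialize (Hq m ltac:(lia)). rewrite !snoc_last in Hq.
      rewrite Hq. unfold delta. lra.
Qed.

Lemma back_finite s (v : nat -> U) K eps :
  almost_extension_property dX -> partial_isometry s -> 0 < eps ->
  exists s', partial_isometry s' /\ extends s s' /\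
    forall j, (j <= K)%nat -> exists i, (i < len s')%nat /\ dU (img s' i) (v j) < eps.
Proof.
  intros HA Hs Heps. induction K as [|K [s1 [Hs1 [Hext1 Hnear1]]]].
  - destruct (back s (v O) eps HA Hs Heps) as [s' [Hs' [Hext Hnear]]].
    exists s'. split; [|split]; auto. intros j Hj. replace j with O by lia. exact Hnear.
  - destruct (back s1 (v (S K)) eps HA Hs1 Heps) as [s' [Hs' [[Hle Hext] Hnear]]].
    exists s'. split; [|split]; [exact Hs' | apply extends_trans with s1; [|split]; auto |].
    intros j Hj. destruct (Nat.eq_dec j (S K)) as [->|Hne]; [exact Hnear|].
    destruct (Hnear1 j ltac:(lia)) as [i [Hi Hd]]. exists i. split; [lia|].
    rewrite (proj2 (Hext i Hi)). exact Hd.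
Qed.

Lemma nat_dependent_choice {A : Type} (G : A -> Prop) (P : nat -> A -> A -> Prop) (a0 : A) :
  G a0 -> (forall k a, G a -> exists a', G a' /\ P k a a') ->
  exists a : nat -> A, forall k, G (a k) /\ P k (a k) (a (S k)).
Proof.
  intros Ha0 Hstep.
  assert (next : forall k (a : {a | G a}), {a' : {a | G a} | P k (proj1_sig a) (proj1_sig a')}).
  { intros k [a Ha]. apply constructive_indefinite_description.
    destruct (Hstep k a Ha) as [a' [Ha' HP]]. exists (exist _ a' Ha'). exact HP. }
  set (seq := fix seq k := match k with
                           | O => exist G a0 Ha0
                           | S k' => proj1_sig (next k' (seq k'))
                           end).
  exists (fun k => proj1_sig (seq k)). intros k.
  split; [exact (proj2_sig (seq k)) | exact (proj2_sig (next k (seq k)))].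
Qed.

Section Chain.
Variable chain : nat -> stage.
Hypotheses (Hchain : forall k, partial_isometry (chain k))
  (Hnext : forall k, extends (chain k) (chain (S k))).

Lemma chain_extends k l : (k <= l)%nat -> extends (chain k) (chain l).
Proof.
  induction 1 as [|l _ IH]; [apply extends_refl | apply extends_trans with (chain l); auto].
Qed.

Lemma chain_isometric k i l j :
  (i < len (chain k))%nat -> (j < len (chain l))%nat ->
  dU (img (chain k) i) (img (chain l) j) = dX (dom (chain k) i) (dom (chain l) j).
Proof.
  intros Hi Hj.
  destruct (chain_extends k (Nat.max k l) ltac:(lia)) as [Hlek Hk].
  destruct (chain_extends l (Nat.max k l) ltac:(lia)) as [Hlel Hl].
  destruct (Hk i Hi) as [<- <-], (Hl j Hj) as [<- <-].
  apply (Hchain (Nat.max k l)); lia.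
Qed.

Lemma chain_limit_map :
  (forall x, exists k i, (i < len (chain k))%nat /\ dom (chain k) i = x) ->
  exists e : X -> U, forall k i, (i < len (chain k))%nat -> e (dom (chain k) i) = img (chain k) i.
Proof.
  intros Hcover.
  assert (Hpick : forall x, exists p : nat * nat,
             (snd p < len (chain (fst p)))%nat /\ dom (chain (fst p)) (snd p) = x).
  { intros x. destruct (Hcover x) as [k [i Hi]]. exists (k, i). exact Hi. }
  exists (fun x => let p := proj1_sig (constructive_indefinite_description _ (Hpick x)) in
                   img (chain (fst p)) (snd p)).
  intros k i Hi. simpl.
  destruct (constructive_indefinite_description _ (Hpick (dom (chain k) i)))
    as [[l j] [Hj Hdom]]; simpl in *.
  apply (metric_eq HMU). rewrite chain_isometric, Hdom by auto. apply (metric_refl HX).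
Qed.

Lemma chain_dense_embedding :
  (forall x, exists k i, (i < len (chain k))%nat /\ dom (chain k) i = x) ->
  (forall u eps, 0 < eps -> exists k i, (i < len (chain k))%nat /\ dU (img (chain k) i) u < eps) ->
  isometric_to_dense_subset dX dU.
Proof.
  intros Hcover Hdense. destruct (chain_limit_map Hcover) as [e He].
  exists e. split.
  - intros x y.
    destruct (Hcover x) as [k [i [Hi <-]]], (Hcover y) as [l [j [Hj <-]]].
    rewrite !He by auto. apply chain_isometric; auto.
  - intros u eps Heps. destruct (Hdense u eps Heps) as [k [i [Hi Hd]]].
    exists (img (chain k) i). split; [exists (dom (chain k) i); auto|].
    rewrite (met_sym U dU HMU). exact Hd.
Qed.

End Chain.

Lemma almost_extension_dense_embedding :
  separable dU -> countably_infinite X -> almost_extension_property dX ->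
  isometric_to_dense_subset dX dU.
Proof.
  intros [v Hv] [en [_ Hen]] HA.
  set (P := fun k s s' => extends s s' /\ (exists i, (i < len s')%nat /\ dom s' i = en k) /\
              forall j, (j <= k)%nat ->
                exists i, (i < len s')%nat /\ dU (img s' i) (v j) < / (INR k + 1)).
  destruct (nat_dependent_choice partial_isometry P
              {| len := O; dom := fun _ => en O; img := fun _ => v O |}) as [stages Hstages].
  - split; simpl; intros; lia.
  - intros k s Hs.
    destruct (forth s (en k) Hs) as [s1 [Hs1 [Hext1 [i [Hi Hdom]]]]].
    assert (Hpos : 0 < / (INR k + 1)) by (apply Rinv_0_lt_compat; pose proof (pos_INR k); lra).
    destruct (back_finite s1 v k _ HA Hs1 Hpos) as [s' [Hs' [[Hle Hext] Hnear]]].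
    exists s'. split; [exact Hs'|]. split; [apply extends_trans with s1; [|split]; auto|].
    split; [|exact Hnear]. exists i. split; [lia|]. rewrite (proj1 (Hext i Hi)). exact Hdom.
  - apply (chain_dense_embedding stages (fun k => proj1 (Hstages k))
             (fun k => proj1 (proj2 (Hstages k)))).
    + intros x. destruct (Hen x) as [k <-].
      destruct (Hstages k) as [_ [_ [[i [Hi Hdom]] _]]]. eauto.
    + intros u eps Heps.
      destruct (Hv u (eps / 2) ltac:(lra)) as [w [[j <-] Huv]].
      destruct (archimed_cor1 (eps / 2) ltac:(lra)) as [N [HN HN0]].
      destruct (Hstages (Nat.max j N)) as [_ [_ [_ Hnear]]].
      destruct (Hnear j ltac:(lia)) as [i [Hi Hd]].
      exists (S (Nat.max j N)), i. split; [exact Hi|].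
      assert (/ (INR (Nat.max j N) + 1) <= / INR N).
      { apply Rinv_le_contravar; [apply lt_0_INR; lia|].
        pose proof (le_INR N (Nat.max j N) ltac:(lia)). lra. }
      pose proof (met_tri U dU HMU (img (stages (S (Nat.max j N))) i) (v j) u).
      rewrite (met_sym U dU HMU (v j) u) in *. lra.
Qed.

End BackAndForth.

Theorem fact3p7 (U : Type) (dU : U -> U -> R) (HU : is_urysohn dU)
  (X : Type) (dX : X -> X -> R) (HX : metric_on X dX)
  (Hcount : countably_infinite X) :
  isometric_to_dense_subset dX dU <-> almost_extension_property dX.
Proof.
  destruct HU as [HMU [_ [Hsep HEU]]]. split.
  - intros [e [He Hdense]]. exact (dense_isometric_almost_extension HMU HEU HX e He Hdense).
  - exact (almost_extension_dense_embedding HMU HEU HX Hsep Hcount).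
Qed.
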